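(* For any proper, lsc, convex $f:\mathbb R^n\to\overline{\mathbb R}$, $f$ is B-smooth if and only if $f=\overleftarrow{\mathrm{env}}_\phi g$ for some proper function $g:\mathbb R^n\to\overline{\mathbb R}$.
   Context: Standing assumption: $\phi:\mathbb R^n\to\mathbb R$ is convex, finite-valued, differentiable and strictly convex (Legendre with full domain), super-coercive. $D_\phi(x,y)=\phi(x)-\phi(y)-\langle\nabla\phi(y),x-y\rangle$, and $\overleftarrow{\mathrm{env}}_\phi g(x)=\inf_y\{g(y)+D_\phi(x,y)\}$. $f$ is B-weakly convex if $f+\phi$ is convex, and B-smooth if both $f$ and $-f$ are proper and B-weakly convex. *)

From HB Require Import structures.
From mathcomp Require Import all_boot all_order all_algebra.
From mathcomp Require Import all_classical all_reals all_analysis.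
Set Implicit Arguments. Unset Strict Implicit. Unset Printing Implicit Defensive.
Import Order.TTheory GRing.Theory Num.Theory.
Import numFieldNormedType.Exports.
Local Open Scope classical_set_scope.
Local Open Scope ring_scope.

Section Defs.
Context {R : realType} {n : nat}.
Notation V := 'rV[R]_n.

Definition rconvex (phi : V -> R) : Prop :=
  forall (x y : V) (t : R), 0 <= t <= 1 ->
    phi (t *: x + (1 - t) *: y) <= t * phi x + (1 - t) * phi y.

Definition strictly_convex (phi : V -> R) : Prop :=
  forall (x y : V) (t : R), x != y -> 0 < t < 1 ->
    phi (t *: x + (1 - t) *: y) < t * phi x + (1 - t) * phi y.

(* super-coercive: phi x / |x| -> +oo as |x| -> +oo *)
Definition supercoercive (phi : V -> R) : Prop :=
  forall M : R, exists r : R, forall x : V, r < `|x| -> M * `|x| <= phi x.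

(* convexity of an extended-valued function: its epigraph is convex *)
Definition econvex (f : V -> \bar R) : Prop :=
  forall (x y : V) (a b t : R), 0 <= t <= 1 ->
    (f x <= a%:E)%E -> (f y <= b%:E)%E ->
    (f (t *: x + (1 - t) *: y)%R <= (t * a + (1 - t) * b)%R%:E)%E.

Definition eproper (f : V -> \bar R) : Prop :=
  (forall x, f x != -oo%E) /\ (exists x, f x != +oo%E).

Definition elsc (f : V -> \bar R) : Prop :=
  forall a : R, closed [set x | (f x <= a%:E)%E].

(* Bregman distance D_phi(x,y) = phi x - phi y - <grad phi(y), x - y>,
   where <grad phi(y), v> is the differential 'd phi y applied to v. *)
Definition bregman (phi : V -> R) (x y : V) : R :=
  phi x - phi y - 'd phi y (x - y).

Definition left_env (phi : V -> R) (g : V -> \bar R) (x : V) : \bar R :=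
  ereal_inf [set (g y + (bregman phi x y)%:E)%E | y in [set: V]].

Definition B_weakly_convex (phi : V -> R) (f : V -> \bar R) : Prop :=
  econvex (fun x => (f x + (phi x)%:E)%E).

Definition B_smooth (phi : V -> R) (f : V -> \bar R) : Prop :=
  eproper f /\ eproper (fun x => (- f x)%E) /\
  B_weakly_convex phi f /\ B_weakly_convex phi (fun x => (- f x)%E).

End Defs.

(* If f and phi - f are convex and finite, the directional derivative of
   h = phi - f at x is sublinear, as is that of f, and the two add up to the
   linear map 'd phi x; hence it is linear.  Super-coercivity makes every
   linear functional a gradient of phi, so grad phi(c) is a subgradient of h
   at x for some c, and then g y := sup_x f x - D_phi(x, y) satisfies
   g c + D_phi(x, c) = f x, whence f = env g.  Conversely phi - env g is a
   supremum of affine functions, hence convex. *)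

From HB Require Import structures.
From mathcomp Require Import all_boot all_order all_algebra.
From mathcomp Require Import all_classical all_reals all_analysis.
From mathcomp Require Import ring lra.
Import Order.TTheory GRing.Theory Num.Theory.
Import numFieldNormedType.Exports.
Local Open Scope classical_set_scope.
Local Open Scope ring_scope.

Section Convexity.
Context {R : realType} {n : nat}.
Implicit Types (k : 'rV[R]_n -> R) (x v w : 'rV[R]_n).

Lemma econvex_EFin k : econvex (fun x => (k x)%:E) <-> rconvex k.
Proof.
split=> [ck x y t t01 | ck x y a b t t01].
  by have := ck x y (k x) (k y) t t01; rewrite !lee_fin; apply.
rewrite !lee_fin => kxa kyb; apply: le_trans (ck x y t t01) _.
have /andP[t0 t1] := t01.
by rewrite lerD // ler_wpM2l // subr_ge0.
Qed.

Lemma rconvexD k1 k2 : rconvex k1 -> rconvex k2 -> rconvex (fun x => k1 x + k2 x).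
Proof.
move=> ck1 ck2 x y t t01.
apply: le_trans (lerD (ck1 x y t t01) (ck2 x y t t01)) _.
by rewrite !mulrDr addrACA.
Qed.

Definition diff_quot k x v (t : R) := (k (x + t *: v) - k x) / t.

Definition dir_deriv k x v := inf [set diff_quot k x v t | t in [set` `]0, +oo[]].

Lemma diff_quotZ k x v s t : s != 0 -> t != 0 ->
  diff_quot k x (s *: v) t = s * diff_quot k x v (s * t).
Proof.
by move=> s0 t0; rewrite /diff_quot scalerA (mulrC t s); field; rewrite s0 t0.
Qed.

Section ConvexDirDeriv.
Context {k : 'rV[R]_n -> R} (k_cvx : rconvex k).

Lemma le_diff_quot x v s t :
  0 < s -> s <= t -> diff_quot k x v s <= diff_quot k x v t.
Proof.
move=> s0 st; have t0 : 0 < t by apply: lt_le_trans st.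
have st01 : 0 <= s / t <= 1.
  by apply/andP; split; [rewrite divr_ge0 ?ltW | rewrite ler_pdivrMr // mul1r].
have := k_cvx (x + t *: v) x (s / t) st01.
have -> : s / t *: (x + t *: v) + (1 - s / t) *: x = x + s *: v.
  by apply/rowP => i; rewrite !mxE; field; exact: lt0r_neq0.
rewrite /diff_quot ler_pdivrMr // => kst.
have -> : (k (x + t *: v) - k x) / t * s = s / t * (k (x + t *: v) - k x).
  by field; exact: lt0r_neq0.
lra.
Qed.

(* [x] is a convex combination of [x - v] and [x + t v]. *)
Lemma diff_quot_lbound x v t : 0 < t -> k x - k (x - v) <= diff_quot k x v t.
Proof.
move=> t0; have t1 : 0 < 1 + t by lra.
have l01 : 0 <= (1 + t)^-1 <= 1.
  by apply/andP; split; [rewrite invr_ge0 ltW | rewrite invf_le1 // lerDl ltW].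
have := k_cvx (x + t *: v) (x - v) (1 + t)^-1 l01.
have -> : (1 + t)^-1 *: (x + t *: v) + (1 - (1 + t)^-1) *: (x - v) = x.
  by apply/rowP => i; rewrite !mxE; field; exact: lt0r_neq0.
rewrite /diff_quot ler_pdivlMr // => kx.
have := ler_wpM2l (ltW t1) kx.
have -> : (1 + t) * ((1 + t)^-1 * k (x + t *: v) + (1 - (1 + t)^-1) * k (x - v)) =
  k (x + t *: v) + t * k (x - v) by field; exact: lt0r_neq0.
lra.
Qed.

Lemma has_lbound_diff_quot x v :
  has_lbound [set diff_quot k x v t | t in [set` `]0, +oo[]].
Proof.
exists (k x - k (x - v)) => _ [t /= + <-].
by rewrite in_itv /= andbT; exact: diff_quot_lbound.
Qed.

Lemma dir_deriv_le x v t : 0 < t -> dir_deriv k x v <= diff_quot k x v t.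
Proof.
move=> t0; apply: ge_inf; first exact: has_lbound_diff_quot.
by exists t => //=; rewrite in_itv /= t0.
Qed.

Lemma dir_deriv_cvg x v : diff_quot k x v t @[t --> 0^'+] --> dir_deriv k x v.
Proof.
apply: nondecreasing_at_right_cvgr => //; last exact: has_lbound_diff_quot.
by move=> s t; rewrite !in_itv /= => /andP[s0 _] _; exact: le_diff_quot.
Qed.

Lemma dir_deriv0 x : dir_deriv k x 0 = 0.
Proof.
have -> : dir_deriv k x 0 = lim (diff_quot k x 0 t @[t --> 0^'+]).
  by apply/esym/cvg_lim => //; exact: dir_deriv_cvg.
have -> : diff_quot k x 0 = cst 0.
  by apply/funext => t; rewrite /diff_quot scaler0 addr0 subrr mul0r.
exact: lim_cst.
Qed.

Lemma diff_quot_midpoint x v w t : 0 < t ->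
  diff_quot k x (v + w) (t / 2) <= diff_quot k x v t + diff_quot k x w t.
Proof.
move=> t0; have h01 : 0 <= (2^-1 : R) <= 1 by apply/andP; split; lra.
have := k_cvx (x + t *: v) (x + t *: w) 2^-1 h01.
have -> : 2^-1 *: (x + t *: v) + (1 - 2^-1) *: (x + t *: w) = x + t / 2 *: (v + w).
  by apply/rowP => i; rewrite !mxE; field.
rewrite /diff_quot -mulrDl invf_div mulrA ler_pM2r ?invr_gt0 // => kmid.
lra.
Qed.

Lemma dir_deriv_subadd x v w :
  dir_deriv k x (v + w) <= dir_deriv k x v + dir_deriv k x w.
Proof.
apply: cvgr_to_ge (cvgD (dir_deriv_cvg x v) (dir_deriv_cvg x w)) _.
near=> t; have t0 : 0 < t by near: t; exact: nbhs_right_gt.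
change (dir_deriv k x (v + w) <= diff_quot k x v t + diff_quot k x w t).
apply: le_trans _ (diff_quot_midpoint x v w t t0).
exact/dir_deriv_le/divr_gt0.
Unshelve. all: by end_near. Qed.

Lemma dir_deriv_addN_ge0 x v : 0 <= dir_deriv k x v + dir_deriv k x (- v).
Proof. by rewrite -(dir_deriv0 x) -(subrr v); exact: dir_deriv_subadd. Qed.

Lemma dir_deriv_scale_le x v s :
  0 < s -> dir_deriv k x (s *: v) <= s * dir_deriv k x v.
Proof.
move=> s0; apply: cvgr_to_ge (cvgM (cvg_cst s) (dir_deriv_cvg x v)) _.
near=> t; have t0 : 0 < t by near: t; exact: nbhs_right_gt.
have := dir_deriv_le x (s *: v) (t / s) (divr_gt0 t0 s0).
by rewrite diff_quotZ ?gt_eqF ?divr_gt0 // [s * (t / s)]mulrC divfK ?gt_eqF.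
Unshelve. all: by end_near. Qed.

Lemma dir_deriv_scale x v s :
  0 < s -> dir_deriv k x (s *: v) = s * dir_deriv k x v.
Proof.
move=> s0; apply/eqP; rewrite eq_le dir_deriv_scale_le //=.
have := dir_deriv_scale_le x (s *: v) (s^-1); rewrite invr_gt0 => /(_ s0).
by rewrite scalerA mulVf ?gt_eqF // scale1r -ler_pdivlMl.
Qed.

End ConvexDirDeriv.

Lemma diff_quot_cvg k x v : differentiable k x ->
  diff_quot k x v t @[t --> 0^'+] --> 'd k x v.
Proof.
move=> dk; apply: cvg_dnbhs_at_right; rewrite -deriveE //.
have -> : diff_quot k x v = fun t => t^-1 *: ((k \o shift x) (t *: v) - k x).
  by apply/funext => t; rewrite /diff_quot /= (addrC x) mulrC.
exact: diff_derivable.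
Qed.

Section SplitDirDeriv.
Context {phi h f0 : 'rV[R]_n -> R} {x : 'rV[R]_n}.
Context (phi_dx : differentiable phi x) (h_cvx : rconvex h) (f0_cvx : rconvex f0).
Context (phi_split : forall z, h z + f0 z = phi z).

Lemma dir_deriv_split v : dir_deriv h x v + dir_deriv f0 x v = 'd phi x v.
Proof.
have dq_split : diff_quot h x v \+ diff_quot f0 x v = diff_quot phi x v.
  by apply/funext => t; rewrite /diff_quot /= -mulrDl addrACA -opprD !phi_split.
have := diff_quot_cvg phi x v phi_dx; rewrite -dq_split.
exact: (cvg_unique _
  (cvgD (dir_deriv_cvg h_cvx x v) (dir_deriv_cvg f0_cvx x v))).
Qed.

(* Both [dir_deriv h x] and [dir_deriv f0 x] are sublinear while their sum
   is linear. *)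
Lemma dir_deriv_splitN v : dir_deriv h x (- v) = - dir_deriv h x v.
Proof.
have := dir_deriv_split (- v); rewrite linearN /= -(dir_deriv_split v).
have := dir_deriv_addN_ge0 h_cvx x v; have := dir_deriv_addN_ge0 f0_cvx x v.
lra.
Qed.

Lemma dir_deriv_splitD v w :
  dir_deriv h x (v + w) = dir_deriv h x v + dir_deriv h x w.
Proof.
apply/eqP; rewrite eq_le dir_deriv_subadd //=.
have := dir_deriv_subadd h_cvx x (- v) (- w).
rewrite -opprD !dir_deriv_splitN; lra.
Qed.

Lemma dir_deriv_splitZ c v : dir_deriv h x (c *: v) = c * dir_deriv h x v.
Proof.
have [c0|c0|->] := ltgtP c 0; last by rewrite scale0r mul0r dir_deriv0.
  rewrite -[c *: v]opprK -scalerN -scaleNr dir_deriv_scale ?oppr_gt0 //.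
  by rewrite dir_deriv_splitN mulrNN.
exact: dir_deriv_scale.
Qed.

End SplitDirDeriv.
End Convexity.

Section LinearFunctional.
Context {R : realType} {n : nat} {l : 'rV[R]_n -> R}.
Context (l_add : forall v w, l (v + w) = l v + l w)
        (l_scale : forall c v, l (c *: v) = c * l v).

Lemma linear_functional_bound :
  exists2 C, 0 <= C & forall v, `|l v| <= C * `|v|.
Proof.
have l0 : l 0 = 0 by rewrite -(scale0r 0) l_scale mul0r.
exists (\sum_(j < n) `|l (delta_mx 0 j)|); first exact: sumr_ge0.
move=> v; rewrite {1}(row_sum_delta v) (big_morph l l_add l0).
apply: le_trans (ler_norm_sum _ _ _) _; rewrite mulr_suml; apply: ler_sum => j _.
rewrite l_scale normrM mulrC ler_wpM2l // [leRHS]/Num.norm /= mx_normrE.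
by apply/bigmax_geP; right; exists (ord0, j).
Qed.

Lemma linear_functional_continuous : continuous l.
Proof.
have [C C0 lC] := linear_functional_bound.
have lB v w : l (v - w) = l v - l w by rewrite l_add -scaleN1r l_scale mulN1r.
move=> x; apply/(@cvgrPdist_lt _ _ _ (nbhs x)) => e e0.
have C1 : 0 < C + 1 by lra.
have eC : 0 < e / (C + 1) by exact: divr_gt0.
have near_x : \forall y \near x, `|x - y| < e / (C + 1).
  by apply/nbhs_normP; exists (e / (C + 1)).
near=> y; have xy : `|x - y| < e / (C + 1) by near: y.
rewrite -lB; apply: le_lt_trans (lC _) _.
apply: le_lt_trans (_ : _ <= (C + 1) * `|x - y|) _.
  by rewrite ler_wpM2r // lerDl.
by rewrite mulrC -ltr_pdivlMr.
Unshelve. all: by end_near. Qed.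

Section SubLinearMinimum.
Context (phi : 'rV[R]_n -> R).

(* Super-coercivity makes [phi - l] large outside a ball, so its minimum on
   that compact ball is global. *)
Lemma exists_min_sub_linear : continuous phi -> supercoercive phi ->
  exists c, forall y, phi c - l c <= phi y - l y.
Proof.
move=> phi_cont phi_coer.
have [C C0 lC] := linear_functional_bound.
have [r phi_ge] := phi_coer (C + 1).
pose k y := phi y - l y.
pose rad := Num.max r (Num.max (k 0) 0).
pose B := [set y : 'rV[R]_n | `|y| <= rad].
have B0 : B 0 by rewrite /B /= normr0 /rad !le_max lexx !orbT.
have B_compact : compact B.
  apply: bounded_closed_compact.
    exists rad; split; first exact: num_real.
    by move=> M radM y By; apply: le_trans By (ltW radM).
  apply: (@preimage_closed _ _ (fun y : 'rV[R]_n => `|y|) [set r | r <= rad]).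
    by move=> x _; exact: norm_continuous.
  exact: closed_le.
have k_cont : continuous k.
  move=> x; apply: (@cvgB _ _ _ (nbhs x) _ phi l); first exact: phi_cont.
  exact: linear_functional_continuous.
have [c _ c_min] :=
  EVT_min_rV (ex_intro _ 0 B0) B_compact (continuous_subspaceT k_cont).
exists c => y; have [By|By] := boolP (y \in B); first exact: c_min.
have rad_y : rad < `|y|.
  by move: By; rewrite notin_setE /B /= => /negP; rewrite -ltNge.
have r_y : r < `|y| by apply: le_lt_trans rad_y; rewrite le_max lexx.
have := phi_ge y r_y.
have := lC y; rewrite ler_norml => /andP[_ ly].
have := c_min 0 (mem_set B0); have : k 0 <= rad by rewrite /rad !le_max lexx !orbT.
rewrite /k; nra.
Qed.

Lemma differential_min_sub_linear c : differentiable phi c ->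
  (forall y, phi c - l c <= phi y - l y) -> forall v, 'd phi c v = l v.
Proof.
move=> dc c_min.
have l_le w : l w <= 'd phi c w.
  apply: cvgr_to_ge (diff_quot_cvg phi c w dc) _; near=> t.
  have t0 : 0 < t by near: t; exact: nbhs_right_gt.
  have := c_min (c + t *: w); rewrite l_add l_scale => ct.
  by rewrite /diff_quot ler_pdivlMr // mulrC; lra.
move=> v; apply/eqP; rewrite eq_le l_le andbT.
have := l_le (- v); rewrite linearN /= -scaleN1r l_scale mulN1r; lra.
Unshelve. all: by end_near. Qed.

End SubLinearMinimum.

Lemma differential_surjective {phi : 'rV[R]_n -> R} :
  (forall x, differentiable phi x) -> supercoercive phi ->
  exists c, forall v, 'd phi c v = l v.
Proof.
move=> phi_diff phi_coer.
have [|c c_min] := exists_min_sub_linear phi _ phi_coer.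
  by move=> x; exact: differentiable_continuous.
by exists c; exact: differential_min_sub_linear.
Qed.

End LinearFunctional.

(* The directional derivative of [h] at [x] is a linear functional, hence the
   differential of [phi] at some point [c]. *)
Lemma split_convex_subgradient {R : realType} {n : nat}
    {phi h f0 : 'rV[R]_n -> R} :
  (forall x, differentiable phi x) -> supercoercive phi ->
  rconvex h -> rconvex f0 -> (forall z, h z + f0 z = phi z) ->
  forall x, exists c, forall z, 'd phi c (z - x) <= h z - h x.
Proof.
move=> phi_diff phi_coer h_cvx f0_cvx phi_split x.
have [c c_grad] := differential_surjective
  (dir_deriv_splitD (phi_diff x) h_cvx f0_cvx phi_split)
  (dir_deriv_splitZ (phi_diff x) h_cvx f0_cvx phi_split) phi_diff phi_coer.
exists c => z; rewrite c_grad.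
have := dir_deriv_le h_cvx x (z - x) 1 ltr01.
by rewrite /diff_quot scale1r divr1 addrCA subrr addr0.
Qed.

Section BregmanEnvelope.
Context {R : realType} {n : nat}.
Implicit Types (phi : 'rV[R]_n -> R) (f g : 'rV[R]_n -> \bar R).

Lemma bregmanB phi x x' c :
  bregman phi x' c - bregman phi x c = phi x' - phi x - 'd phi c (x' - x).
Proof.
have -> : x' - x = (x' - c) - (x - c) by rewrite opprB addrA subrK.
by rewrite /bregman linearB /=; ring.
Qed.

Lemma phi_sub_bregman_comb phi x y w t :
  phi (t *: x + (1 - t) *: y) - bregman phi (t *: x + (1 - t) *: y) w =
  t * (phi x - bregman phi x w) + (1 - t) * (phi y - bregman phi y w).
Proof.
rewrite /bregman.
have -> : t *: x + (1 - t) *: y - w = t *: (x - w) + (1 - t) *: (y - w).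
  by apply/rowP => i; rewrite !mxE; ring.
have -> : 'd phi w (t *: (x - w) + (1 - t) *: (y - w)) =
    t * 'd phi w (x - w) + (1 - t) * 'd phi w (y - w).
  by rewrite linearD !linearZ.
ring.
Qed.

Definition sup_bregman phi f y :=
  ereal_sup [set (f x - (bregman phi x y)%:E)%E | x in [set: 'rV[R]_n]].

Lemma left_env_le phi g x y :
  (left_env phi g x <= g y + (bregman phi x y)%:E)%E.
Proof. by apply: ereal_inf_lbound; exists y. Qed.

Lemma sup_bregman_ge phi f x y :
  (f x - (bregman phi x y)%:E <= sup_bregman phi f y)%E.
Proof. by apply: ereal_sup_ubound; exists x. Qed.

Section SupBregman.
Context {phi f0 : 'rV[R]_n -> R}.
Context (phi_diff : forall x, differentiable phi x) (phi_coer : supercoercive phi).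
Context (f0_cvx : rconvex f0) (h_cvx : rconvex (fun x => phi x - f0 x)).
Let g := sup_bregman phi (fun x => (f0 x)%:E).

(* Take [c] such that grad phi(c) is a subgradient of [phi - f0] at [x]. *)
Lemma sup_bregman_attained x : exists c, (g c <= (f0 x - bregman phi x c)%:E)%E.
Proof.
have phi_split z : (phi z - f0 z) + f0 z = phi z by rewrite subrK.
have [c c_sub] :=
  split_convex_subgradient phi_diff phi_coer h_cvx f0_cvx phi_split x.
exists c; apply: ge_ereal_sup => _ [x' _ <-]; rewrite -EFinB lee_fin.
have := c_sub x'; have := bregmanB phi x x' c; lra.
Qed.

Lemma sup_bregman_proper : eproper g.
Proof.
split=> [y | ].
  have := sup_bregman_ge phi (fun x => (f0 x)%:E) y y.
  by rewrite -/g; case: (g y).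
by have [c gc] := sup_bregman_attained 0; exists c; move: gc; case: (g c).
Qed.

Lemma left_env_sup_bregman : left_env phi g = (fun x => (f0 x)%:E).
Proof.
apply/funext => x; apply/eqP; rewrite eq_le; apply/andP; split.
  have [c c_le] := sup_bregman_attained x.
  apply: le_trans (left_env_le phi g x c) _.
  move: c_le; case: (g c) => [r | | ] //=; last by move=> _; rewrite addNye leNye.
  by rewrite -EFinD !lee_fin; lra.
apply: le_ereal_inf_tmp => _ [w _ <-].
have := sup_bregman_ge phi (fun x => (f0 x)%:E) x w; rewrite -/g.
case: (g w) => [r | | ] //=; last by rewrite addye ?leey.
by rewrite -EFinD !lee_fin; lra.
Qed.

End SupBregman.
End BregmanEnvelope.

Section LeftEnvelope.
Context {R : realType} {n : nat}.
Implicit Types (phi : 'rV[R]_n -> R) (f g : 'rV[R]_n -> \bar R).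

Lemma fin_num_fun_EFin {f : 'rV[R]_n -> \bar R} :
  (forall x, f x \is a fin_num) -> exists k, f = (fun x => (k x)%:E).
Proof. by move=> f_fin; exists (fine \o f); apply/funext => x; rewrite /= fineK. Qed.

Lemma fin_num_eproper f : (forall x, f x \is a fin_num) -> eproper f.
Proof.
move=> f_fin; split=> [x | ]; last exists 0.
  by have := f_fin x; rewrite fin_numE => /andP[].
by have := f_fin 0; rewrite fin_numE => /andP[].
Qed.

Lemma B_weakly_convex_EFin phi (k : 'rV[R]_n -> R) :
  B_weakly_convex phi (fun x => (k x)%:E) <-> rconvex (fun x => k x + phi x).
Proof. exact: econvex_EFin. Qed.

Lemma B_weakly_convex_oppEFin phi (k : 'rV[R]_n -> R) :
  B_weakly_convex phi (fun x => - (k x)%:E)%E <-> rconvex (fun x => phi x - k x).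
Proof.
have -> : (fun x => phi x - k x) = (fun x => - k x + phi x).
  by apply/funext => x; rewrite addrC.
exact: (B_weakly_convex_EFin phi (fun x => - k x)).
Qed.

Lemma left_env_fin_num phi g : eproper g ->
  (forall x, left_env phi g x != -oo%E) ->
  forall x, left_env phi g x \is a fin_num.
Proof.
move=> [_ [y gy]] env_N x; rewrite fin_numE env_N /=.
apply: contraTneq (left_env_le phi g x y) => ->.
by rewrite leye_eq; case: (g y) gy.
Qed.

(* [phi - left_env phi g] is a supremum of the affine functions
   [phi - D_phi(., w) - g w]. *)
Lemma phi_sub_left_env_convex phi g (f0 : 'rV[R]_n -> R) : eproper g ->
  left_env phi g = (fun x => (f0 x)%:E) -> rconvex (fun x => phi x - f0 x).
Proof.
move=> [g_N _] f_env x y t t01; have /andP[t0 t1] := t01.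
set z := t *: x + (1 - t) *: y.
suff : ((phi z - t * (phi x - f0 x) - (1 - t) * (phi y - f0 y))%:E <= (f0 z)%:E)%E.
  by rewrite lee_fin; lra.
rewrite -[X in (_ <= X)%E](congr1 (@^~ z) f_env).
apply: le_ereal_inf_tmp => _ [w _ <-].
have := left_env_le phi g x w; have := left_env_le phi g y w.
rewrite f_env; move: (g_N w).
case: (g w) => [r | | ] //= _; last by rewrite addye ?leey.
rewrite -!EFinD !lee_fin => yw xw.
have comb := phi_sub_bregman_comb phi x y w t; rewrite -/z in comb.
have xr : phi x - bregman phi x w - r <= phi x - f0 x by lra.
have yr : phi y - bregman phi y w - r <= phi y - f0 y by lra.
have t1' : 0 <= 1 - t by rewrite subr_ge0.
have := ler_wpM2l t0 xr; have := ler_wpM2l t1' yr; lra.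
Qed.

End LeftEnvelope.

Lemma B_smooth_left_env {R : realType} {n : nat} {phi : 'rV[R]_n -> R}
    (f : 'rV[R]_n -> \bar R) :
  (forall x, differentiable phi x) -> supercoercive phi -> econvex f ->
  B_smooth phi f -> exists g, eproper g /\ f = left_env phi g.
Proof.
move=> phi_diff phi_coer f_cvx [[f_N _] [[fN_N _] [_ fN_wcvx]]].
have f_fin x : f x \is a fin_num.
  by rewrite fin_numE f_N /=; apply: contra (fN_N x) => /eqP ->.
have [f0 f_E] := fin_num_fun_EFin f_fin; subst f.
have f0_cvx : rconvex f0 by exact/econvex_EFin.
have h_cvx : rconvex (fun x => phi x - f0 x) by exact/B_weakly_convex_oppEFin.
exists (sup_bregman phi (fun x => (f0 x)%:E)).
by rewrite left_env_sup_bregman //; split; first exact: sup_bregman_proper.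
Qed.

Lemma left_env_B_smooth {R : realType} {n : nat} {phi : 'rV[R]_n -> R}
    (f g : 'rV[R]_n -> \bar R) :
  rconvex phi -> econvex f -> eproper f -> eproper g -> f = left_env phi g ->
  B_smooth phi f.
Proof.
move=> phi_cvx f_cvx f_prop g_prop f_env.
have f_fin : forall x, f x \is a fin_num.
  rewrite f_env; apply: left_env_fin_num => // x.
  by rewrite -f_env; exact: f_prop.1.
have [f0 f_E] := fin_num_fun_EFin f_fin; rewrite {}f_E in f_cvx f_prop f_env *.
split=> //; split; first by apply: fin_num_eproper => x; rewrite fin_numN.
split; first by apply/B_weakly_convex_EFin/rconvexD => //; exact/econvex_EFin.
apply/B_weakly_convex_oppEFin.
exact: phi_sub_left_env_convex g_prop (esym f_env).
Qed.

Theorem mainTheorem6 (R : realType) (n : nat) (phi : 'rV[R]_n -> R)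
  (phi_cvx : rconvex phi) (phi_strict : strictly_convex phi)
  (phi_diff : forall x, differentiable phi x)
  (phi_coer : supercoercive phi)
  (f : 'rV[R]_n -> \bar R)
  (f_proper : eproper f) (f_lsc : elsc f) (f_cvx : econvex f) :
  B_smooth phi f <->
  exists g : 'rV[R]_n -> \bar R, eproper g /\ f = left_env phi g.
Proof.
split=> [|[g [g_proper f_env]]]; first exact: B_smooth_left_env.
exact: left_env_B_smooth phi_cvx f_cvx f_proper g_proper f_env.
Qed.
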